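(* Assume in addition that $\lambda_A>0$ (the dataset need not be balanced). Let $\alpha=\lambda_A/32$ and $M=32/\lambda_A^2$ (assumed to be an integer). Then the iterates of TD-SVRG (Algorithm 1) satisfy, for every $m\ge0$, $$\mathbb E\big[\|\tilde\theta_m-\theta^*\|^2\big]\le\left(\tfrac57\right)^m\|\tilde\theta_0-\theta^*\|^2.$$
   Context: Finite-sample setting. Let $\mathcal S$ be a finite state space, $\phi:\mathcal S\to\mathbb R^d$ a feature map with $\|\phi(s)\|_2\le 1$ for all $s$, $r:\mathcal S\times\mathcal S\to\mathbb R$ a reward function and $\gamma\in[0,1)$. For a pair of states $(s,s')$ and $\theta\in\mathbb R^d$ let $g_{s,s'}(\theta)=(r(s,s')+\gamma\phi(s')^T\theta-\phi(s)^T\theta)\phi(s)$. A dataset is a state trajectory $s_1,\dots,s_{N+1}$, giving the $N$ pairs $(s_t,s_{t+1})$, $t=1,\dots,N$. Let $A_d=\frac1N\sum_{t=1}^N\phi(s_t)(\phi(s_t)-\gamma\phi(s_{t+1}))^T$ and $b_d=\frac1N\sum_{t=1}^N r(s_t,s_{t+1})\phi(s_t)$, so that $\bar g(\theta):=\frac1N\sum_{t=1}^N g_{s_t,s_{t+1}}(\theta)=-A_d\theta+b_d$. Assume $A_d$ is nonsingular and let $\theta^*=A_d^{-1}b_d$. Let $\lambda_A$ denote the minimum eigenvalue of $(A_d+A_d^T)/2$. Algorithm 1 (TD-SVRG): given $\alpha>0$, an integer $M\ge1$ and an initial $\tilde\theta_0\in\mathbb R^d$, for epochs $m=1,2,\dots$: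 set $\tilde\theta=\tilde\theta_{m-1}$, compute $\bar g(\tilde\theta)$, set $\theta_0=\tilde\theta$; for $t=1,\dots,M$ draw an index $i_t$ uniformly from $\{1,\dots,N\}$, independently of everything else, put $(s,s')=(s_{i_t},s_{i_t+1})$, $v_t=g_{s,s'}(\theta_{t-1})-g_{s,s'}(\tilde\theta)+\bar g(\tilde\theta)$ and $\theta_t=\theta_{t-1}+\alpha v_t$; finally set $\tilde\theta_m=\theta_{t'}$ where $t'$ is drawn uniformly from $\{0,\dots,M-1\}$ independently of everything else. *)

From HB Require Import structures.
From mathcomp Require Import all_boot all_order all_algebra.
From mathcomp Require Import reals.
Set Implicit Arguments. Unset Strict Implicit. Unset Printing Implicit Defensive.
Import Order.TTheory GRing.Theory Num.Theory.
Local Open Scope ring_scope.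

Section TDSVRG.
Variables (R : realType) (S : finType) (d : nat).

Definition dotv (u v : 'cV[R]_d) : R := (u^T *m v) 0 0.
Definition sqnorm (v : 'cV[R]_d) : R := \sum_(i < d) v i 0 ^+ 2.

Definition is_min_eigenvalue (B : 'M[R]_d) (l : R) : Prop :=
  eigenvalue B l /\ (forall mu, eigenvalue B mu -> l <= mu).

Definition sym_part (B : 'M[R]_d) : 'M[R]_d := 2^-1 *: (B + B^T).

Variables (phi : S -> 'cV[R]_d) (r : S -> S -> R) (gamma : R).

Definition gTD (x x' : S) (theta : 'cV[R]_d) : 'cV[R]_d :=
  (r x x' + gamma * dotv (phi x') theta - dotv (phi x) theta) *: phi x.

(* Dataset: trajectory s_0, ..., s_N (0-indexed), giving the N pairs
   (s_t, s_{t+1}), t : 'I_N. *)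
Variables (N : nat) (s : 'I_N.+1 -> S).

Definition st (t : 'I_N) : S := s (widen_ord (leqnSn N) t).
Definition st1 (t : 'I_N) : S := s (lift ord0 t).

Definition A_d : 'M[R]_d :=
  N%:R^-1 *: \sum_(t < N) (phi (st t) *m (phi (st t) - gamma *: phi (st1 t))^T).
Definition b_d : 'cV[R]_d :=
  N%:R^-1 *: \sum_(t < N) (r (st t) (st1 t) *: phi (st t)).
Definition gbar (theta : 'cV[R]_d) : 'cV[R]_d :=
  N%:R^-1 *: \sum_(t < N) gTD (st t) (st1 t) theta.
Definition theta_star : 'cV[R]_d := invmx A_d *m b_d.

Variables (alpha : R) (M : nat).

(* Randomness of one epoch: the M indices i_1..i_M (uniform in 'I_N) and t'
   (uniform in 'I_M), all independent. *)
Definition Omega : finType := (M.-tuple 'I_N * 'I_M)%type.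

Definition inner_step (tt : 'cV[R]_d) (theta : 'cV[R]_d) (i : 'I_N) : 'cV[R]_d :=
  theta + alpha *: (gTD (st i) (st1 i) theta - gTD (st i) (st1 i) tt + gbar tt).

(* one epoch: from theta_tilde_{m-1} to theta_tilde_m = theta_{t'} *)
Definition epoch (tt : 'cV[R]_d) (w : Omega) : 'cV[R]_d :=
  foldl (inner_step tt) tt (take w.2 (tval w.1)).

Definition run (theta0 : 'cV[R]_d) (m : nat) (ws : m.-tuple Omega) : 'cV[R]_d :=
  foldl epoch theta0 ws.

(* Expectation of f(theta_tilde_m): uniform average over the finite product
   probability space of the m epochs. *)
Definition Exp_iter (m : nat) (f : 'cV[R]_d -> R) (theta0 : 'cV[R]_d) : R :=
  (#|{: m.-tuple Omega}|%:R)^-1 * \sum_(ws : m.-tuple Omega) f (run theta0 ws).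

End TDSVRG.

From HB Require Import structures.
From mathcomp Require Import all_boot all_order all_algebra.
From mathcomp Require Import reals.
From mathcomp Require Import complex spectral ring lra.

(* Write [e = theta - theta_star] for the inner iterate and [f = tt - theta_star] for the
   anchor.  Since [gbar theta = - A_d (theta - theta_star)], an inner step adds
   [alpha (- q_i^T e p_i + (q_i^T f p_i - A_d f))] to [e], with [p_i = phi(s_i)],
   [q_i = phi(s_i) - gamma phi(s_(i+1))]; the second summand has mean zero and
   variance at most [4 |f|^2], and [e^T A_d e >= lambda_A |e|^2], [|q_i^T x| <= 2|x|].
   Averaging over [i] gives
     E|e'|^2 <= (1 - 2 alpha lambda_A + 8 alpha^2) |e|^2 + 8 alpha^2 |f|^2.
   Summing this recurrence over the M inner steps and averaging over the output
   index gives [M (2 alpha lambda_A - 8 alpha^2) E|theta~_m - theta_star|^2 <=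
   (1 + 8 alpha^2 M) |theta~_(m-1) - theta_star|^2], i.e. a factor (5/4)/(7/4) = 5/7
   per epoch for the chosen alpha and M. *)

Set Implicit Arguments. Unset Strict Implicit. Unset Printing Implicit Defensive.
Import Order.TTheory GRing.Theory Num.Theory.
Local Open Scope ring_scope.

Section Spectral.
Local Open Scope sesquilinear_scope.

Lemma spectral_diag_eigenvalue (C : numClosedFieldType) n (A : 'M[C]_n) j :
  A \is normalmx -> eigenvalue A (spectral_diag A 0 j).
Proof.
move=> /orthomx_spectralP; have Pu := spectral_unit A.
set P := spectralmx A => defA.
apply/eigenvalueP; exists (row j P).
  rewrite {1}defA !mulmxA -row_mul mulmxV // row1.
  by rewrite -rowE row_diag_mx -scalemxAl -rowE.
apply/eqP => Pj0.
have : row j (P *m invmx P) = 0 by rewrite row_mul Pj0 mul0mx.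
rewrite mulmxV // row1 => /matrixP /(_ 0 j) /eqP.
by rewrite !mxE !eqxx oner_eq0.
Qed.

Lemma hermitian_quad_form_ge (C : numClosedFieldType) n (A : 'M[C]_n) (l : C)
    (x : 'cV[C]_n) :
  A \is hermsymmx -> (forall j, l <= spectral_diag A 0 j) ->
  l * (x^t* *m x) 0 0 <= (x^t* *m A *m x) 0 0.
Proof.
move=> Aherm lD; have /orthomx_spectralP defA := hermitian_normalmx Aherm.
have PU := spectral_unitarymx A.
rewrite defA invmx_unitary //.
set P := spectralmx A; set D := spectral_diag A.
have PtP : P^t* *m P = 1%:M by rewrite -invmx_unitary // mulVmx // spectral_unit.
have xtP : x^t* *m P^t* = (P *m x)^t* by rewrite trmx_mul map_mxM.
have -> : x^t* *m x = (P *m x)^t* *m (P *m x).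
  by rewrite -xtP -mulmxA (mulmxA (P^t*)) PtP mul1mx.
have -> : x^t* *m (P^t* *m diag_mx D *m P) *m x =
    (P *m x)^t* *m diag_mx D *m (P *m x) by rewrite !mulmxA xtP.
move: (P *m x) => y.
rewrite mul_mx_diag !mxE mulr_sumr; apply: ler_sum => j _; rewrite !mxE.
rewrite mulrAC -subr_ge0 [l * _]mulrC -mulrBr mulr_ge0 ?subr_ge0 //.
by rewrite mulrC mul_conjC_ge0.
Qed.

(* The minimum-eigenvalue bound for a real symmetric matrix is obtained from the
   spectral theorem for its complexification, which is hermitian. *)
Lemma symmetric_quad_form_ge (R : rcfType) n (B : 'M[R]_n) (lam : R)
    (x : 'cV[R]_n) :
  B^T = B -> (forall mu, eigenvalue B mu -> lam <= mu) ->
  lam * (x^T *m x) 0 0 <= (x^T *m B *m x) 0 0.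
Proof.
move=> Bsym Bmin; pose f : {rmorphism R -> R[i]} := real_complex R.
have fle a b : (f a <= f b) = (a <= b) := lecR a b.
have freal a : f a \is Num.real by rewrite realE -(rmorph0 f) !fle le_total.
have fconj a : (f a)^* = f a by apply/CrealP.
set Bc := B ^ f.
have Bherm : Bc \is hermsymmx.
  apply: realsym_hermsym.
    by apply/is_hermitianmxP; rewrite expr0 scale1r map_mx_id // map_trmx Bsym.
  by apply/mxOverP => i j; rewrite mxE freal.
have lD j : f lam <= spectral_diag Bc 0 j.
  have /mxOverP/(_ 0 j) := hermitian_spectral_diag_real Bherm.
  set z := spectral_diag Bc 0 j => zreal.
  have zE : z = f (complex.Re z) by rewrite [f _]complexRe; apply/esym/Creal_ReP.
  rewrite zE fle; apply: Bmin; rewrite -(eigenvalue_map f) -zE.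
  exact/spectral_diag_eigenvalue/hermitian_normalmx.
have xfE : (map_mx f x)^t* = (map_mx f x)^T by apply/matrixP => i j; rewrite !mxE fconj.
have mxf (M : 'M[R]_1) : f (M 0 0) = (M ^ f) 0 0 by rewrite mxE.
rewrite -fle rmorphM !mxf !map_mxM -map_trmx -xfE.
exact: hermitian_quad_form_ge.
Qed.

End Spectral.

Section InnerProduct.
Variables (R : realType) (d : nat).
Implicit Types (u v w : 'cV[R]_d) (a : R).

Lemma dotvE u v : dotv u v = \sum_i u i 0 * v i 0.
Proof. by rewrite /dotv mxE; apply: eq_bigr => i _; rewrite mxE. Qed.

Lemma trmx_mul_dotv u v : u^T *m v = (dotv u v)%:M.
Proof. exact: mx11_scalar. Qed.

Lemma dotvC u v : dotv u v = dotv v u.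
Proof. by rewrite !dotvE; apply: eq_bigr => i _; rewrite mulrC. Qed.

Lemma dotvDl u v w : dotv (u + v) w = dotv u w + dotv v w.
Proof. by rewrite !dotvE -big_split; apply: eq_bigr => i _; rewrite mxE mulrDl. Qed.

Lemma dotvZl a u v : dotv (a *: u) v = a * dotv u v.
Proof. by rewrite !dotvE mulr_sumr; apply: eq_bigr => i _; rewrite mxE mulrA. Qed.

Lemma dotvNl u v : dotv (- u) v = - dotv u v.
Proof. by rewrite -scaleN1r dotvZl mulN1r. Qed.

Lemma dotvBl u v w : dotv (u - v) w = dotv u w - dotv v w.
Proof. by rewrite dotvDl dotvNl. Qed.

Lemma dotvDr u v w : dotv u (v + w) = dotv u v + dotv u w.
Proof. by rewrite !(dotvC u) dotvDl. Qed.

Lemma dotvZr a u v : dotv u (a *: v) = a * dotv u v.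
Proof. by rewrite !(dotvC u) dotvZl. Qed.

Lemma dotvNr u v : dotv u (- v) = - dotv u v.
Proof. by rewrite !(dotvC u) dotvNl. Qed.

Lemma dotvBr u v w : dotv u (v - w) = dotv u v - dotv u w.
Proof. by rewrite dotvDr dotvNr. Qed.

Lemma dotv_suml (I : finType) (F : I -> 'cV[R]_d) v :
  dotv (\sum_i F i) v = \sum_i dotv (F i) v.
Proof.
rewrite dotvE; under eq_bigr do rewrite summxE mulr_suml.
by rewrite exchange_big; apply: eq_bigr => j _; rewrite dotvE.
Qed.

Lemma dotv_sumr (I : finType) (F : I -> 'cV[R]_d) u :
  dotv u (\sum_i F i) = \sum_i dotv u (F i).
Proof. by rewrite dotvC dotv_suml; apply: eq_bigr => i _; rewrite dotvC. Qed.

Lemma sqnorm_dotv u : sqnorm u = dotv u u.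
Proof. by rewrite /sqnorm dotvE; apply: eq_bigr => i _; rewrite expr2. Qed.

Lemma sqnorm_ge0 u : 0 <= sqnorm u.
Proof. by apply: sumr_ge0 => i _; rewrite sqr_ge0. Qed.

Lemma sqnormD u v : sqnorm (u + v) = sqnorm u + 2 * dotv u v + sqnorm v.
Proof. by rewrite !sqnorm_dotv dotvDl !dotvDr (dotvC v u); ring. Qed.

Lemma sqnormB u v : sqnorm (u - v) = sqnorm u - 2 * dotv u v + sqnorm v.
Proof. by rewrite !sqnorm_dotv dotvBl !dotvBr (dotvC v u); ring. Qed.

Lemma sqnormZ a u : sqnorm (a *: u) = a ^+ 2 * sqnorm u.
Proof. by rewrite !sqnorm_dotv dotvZl dotvZr mulrA -expr2. Qed.

Lemma sqnormN u : sqnorm (- u) = sqnorm u.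
Proof. by rewrite -scaleN1r sqnormZ sqrrN expr1n mul1r. Qed.

Lemma sqnormD_le u v : sqnorm (u + v) <= 2 * sqnorm u + 2 * sqnorm v.
Proof. by have := sqnorm_ge0 (u - v); rewrite sqnormB sqnormD; lra. Qed.

Lemma dotv_sqr_le u v : sqnorm u <= 1 -> dotv u v ^+ 2 <= sqnorm v.
Proof.
move=> u1; have := sqnorm_ge0 (dotv u v *: u - v).
rewrite sqnormB sqnormZ dotvZl -expr2.
have : dotv u v ^+ 2 * sqnorm u <= dotv u v ^+ 2 by rewrite ler_piMr ?sqr_ge0.
lra.
Qed.

Lemma sum_sqnorm_centered_le (I : finType) (c : I -> 'cV[R]_d) m :
  \sum_i c i = #|I|%:R *: m -> \sum_i sqnorm (c i - m) <= \sum_i sqnorm (c i).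
Proof.
move=> sum_c; under eq_bigr do rewrite sqnormB.
rewrite big_split sumrB /= -mulr_sumr -dotv_suml sum_c dotvZl sumr_const.
rewrite -mulr_natl sqnorm_dotv.
have : 0 <= #|I|%:R * dotv m m by rewrite -sqnorm_dotv mulr_ge0 ?sqnorm_ge0.
lra.
Qed.

End InnerProduct.

Lemma sym_part_quad_form_ge (R : realType) d (A : 'M[R]_d) lam x :
  is_min_eigenvalue (sym_part A) lam -> lam * sqnorm x <= dotv x (A *m x).
Proof.
move=> [_ lam_min].
have symA : (sym_part A)^T = sym_part A.
  by rewrite /sym_part linearZ /= linearD /= trmxK addrC.
have := symmetric_quad_form_ge x symA lam_min.
rewrite sqnorm_dotv /sym_part -mulmxA -scalemxAl -scalemxAr mulmxDl mulmxDr.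
rewrite [x^T *m (A^T *m x)]mulmxA -trmx_mul !trmx_mul_dotv [dotv (A *m x) x]dotvC.
by rewrite -/(dotv x x) !mxE !eqxx !mulr1n; lra.
Qed.

Section TupleSums.
Variables (V : nmodType) (T : finType).
Implicit Type G : seq T -> V.

Lemma sum_tuple0 G : \sum_(t : 0.-tuple T) G t = G [::].
Proof.
rewrite (eq_bigr (fun _ => G [::])) => [|t _]; last by rewrite tuple0.
by rewrite sumr_const card_tuple.
Qed.

Lemma sum_tuple_cons n G :
  \sum_(t : n.+1.-tuple T) G t = \sum_(x : T) \sum_(t : n.-tuple T) G (x :: t).
Proof.
rewrite pair_big /= (reindex (fun p : T * n.-tuple T => [tuple of p.1 :: p.2])) //=.
exists (fun t : n.+1.-tuple T => (thead t, [tuple of behead t])).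
  by move=> [x t] _; congr (_, _); apply: val_inj.
by move=> t _; apply: val_inj; rewrite /= [in RHS](tuple_eta t).
Qed.

Lemma sum_tuple_rev n G :
  \sum_(t : n.-tuple T) G (rev t) = \sum_(t : n.-tuple T) G t.
Proof.
rewrite [RHS](reindex (fun t : n.-tuple T => [tuple of rev t])) //=.
by exists (fun t : n.-tuple T => [tuple of rev t]) => t _; apply: val_inj; rewrite /= revK.
Qed.

Lemma sum_tuple_rcons n G :
  \sum_(t : n.+1.-tuple T) G t = \sum_(t : n.-tuple T) \sum_(x : T) G (rcons t x).
Proof.
rewrite -sum_tuple_rev (sum_tuple_cons _ (fun t => G (rev t))) exchange_big /=.
rewrite -(sum_tuple_rev _ (fun t => \sum_x G (rcons t x))).
by apply: eq_bigr => t _; apply: eq_bigr => x _; rewrite rev_cons.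
Qed.

Lemma sum_tuple_take n k G : (k <= n)%N ->
  \sum_(t : n.-tuple T) G (take k t) = (\sum_(t : k.-tuple T) G t) *+ #|T| ^ (n - k).
Proof.
elim: n => [|n IHn]; first by rewrite leqn0 => /eqP ->; apply: eq_bigr => t _; rewrite tuple0.
rewrite leq_eqVlt ltnS => /orP[/eqP ->|le_kn].
  by rewrite subnn expn0; apply: eq_bigr => t _; rewrite take_oversize ?size_tuple.
rewrite (sum_tuple_rcons _ (fun t => G (take k t))) subSn // expnS mulnC mulrnA.
rewrite -IHn // -sumrMnl; apply: eq_bigr => t _.
rewrite (eq_bigr (fun _ => G (take k t))) ?sumr_const // => x _.
by rewrite -cats1 takel_cat ?size_tuple.
Qed.

End TupleSums.

Lemma sum_le_of_recurrence (R : realDomainType) (G : nat -> R) (c b : R) :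
  (forall k, G k.+1 + c * G k <= G k + b) ->
  forall K, c * \sum_(k < K) G k + G K <= G 0%N + K%:R * b.
Proof.
move=> G_rec; elim=> [|K IHK]; first by rewrite big_ord0 mulr0 add0r mul0r addr0.
by rewrite big_ord_recr /= -natr1; have := G_rec K; lra.
Qed.

Section TD_SVRG.
Variables (R : realType) (S : finType) (d : nat).
Variables (phi : S -> 'cV[R]_d) (r : S -> S -> R) (gamma : R).
Variables (N : nat) (s : 'I_N.+1 -> S).

Local Notation A := (A_d phi gamma s).
Local Notation thetas := (theta_star phi r gamma s).
Local Notation p i := (phi (st s i)).
Local Notation q i := (phi (st s i) - gamma *: phi (st1 s i)).

Lemma A_d_mulmx x : A *m x = N%:R^-1 *: \sum_i (dotv (q i) x *: p i).
Proof.
rewrite /A_d -scalemxAl mulmx_suml; congr (_ *: _); apply: eq_bigr => i _.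
by rewrite -mulmxA trmx_mul_dotv mul_mx_scalar.
Qed.

Lemma gTDE x x' theta : gTD phi r gamma x x' theta =
  r x x' *: phi x - dotv (phi x - gamma *: phi x') theta *: phi x.
Proof. by rewrite /gTD dotvBl dotvZl -scalerBl; congr (_ *: _); ring. Qed.

Lemma gTDB x x' theta theta' :
  gTD phi r gamma x x' theta - gTD phi r gamma x x' theta' =
  - (dotv (phi x - gamma *: phi x') (theta - theta') *: phi x).
Proof. by rewrite !gTDE dotvBr scalerBl opprB addrC addrA subrK opprB. Qed.

Hypothesis A_unit : A \in unitmx.

Lemma gbar_theta_star theta : gbar phi r gamma s theta = - (A *m (theta - thetas)).
Proof.
have A_thetas : A *m thetas = b_d phi r s by rewrite mulKVmx.
rewrite mulmxBr A_thetas opprB A_d_mulmx /b_d /gbar -scalerBr; congr (_ *: _).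
by rewrite -sumrB; apply: eq_bigr => t _; rewrite gTDE.
Qed.

Variable alpha : R.

Lemma inner_step_sub_theta_star tt theta i :
  inner_step phi r gamma s alpha tt theta i - thetas = (theta - thetas) +
    alpha *: (- (dotv (q i) (theta - thetas) *: p i)
              + (dotv (q i) (tt - thetas) *: p i - A *m (tt - thetas))).
Proof.
rewrite /inner_step gTDB gbar_theta_star addrAC.
have -> : theta - tt = (theta - thetas) - (tt - thetas).
  by rewrite opprB addrA subrK.
by rewrite dotvBr scalerBl opprB [_ - _ *: p i]addrC addrA.
Qed.

Hypotheses (gamma_ge0 : 0 <= gamma) (gamma_lt1 : gamma < 1).
Hypothesis phi_le1 : forall x, sqnorm (phi x) <= 1.

Lemma dotv_td_sqr_le x x' v :
  dotv (phi x - gamma *: phi x') v ^+ 2 <= 4 * sqnorm v.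
Proof.
rewrite dotvBl dotvZl.
have := dotv_sqr_le v (phi_le1 x); have := dotv_sqr_le v (phi_le1 x').
set a := dotv (phi x) v; set b := dotv (phi x') v => b_le a_le.
have : gamma ^+ 2 * b ^+ 2 <= b ^+ 2.
  by rewrite ler_piMl ?sqr_ge0 // expr_le1 // ltW.
have := sqr_ge0 (a + gamma * b); nra.
Qed.

Hypotheses (N_gt0 : (0 < N)%N) (alpha_ge0 : 0 <= alpha).
Variable lam : R.
Hypothesis A_quad : forall x, lam * sqnorm x <= dotv x (A *m x).

Lemma inner_step_mean_sqnorm_le tt theta :
  N%:R^-1 * \sum_i sqnorm (inner_step phi r gamma s alpha tt theta i - thetas)
  <= (1 - 2 * alpha * lam + 8 * alpha ^+ 2) * sqnorm (theta - thetas)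
     + 8 * alpha ^+ 2 * sqnorm (tt - thetas).
Proof.
set e := theta - thetas; set f := tt - thetas.
set X := sqnorm e; set F := sqnorm f.
pose a i := - (dotv (q i) e *: p i).
pose c i := dotv (q i) f *: p i; pose b i := c i - A *m f.
have step_eq i : inner_step phi r gamma s alpha tt theta i - thetas =
    e + alpha *: (a i + b i) by exact: inner_step_sub_theta_star.
have p_le1 i : sqnorm (p i) <= 1 by exact: phi_le1.
have a_le i : sqnorm (a i) <= 4 * X.
  rewrite sqnormN sqnormZ; apply: le_trans (dotv_td_sqr_le _ _ e).
  by apply: ler_piMr; rewrite ?sqr_ge0.
have term_le i : sqnorm (inner_step phi r gamma s alpha tt theta i - thetas) <=
    X + 2 * alpha * dotv e (a i) + 2 * alpha * dotv e (b i)
    + alpha ^+ 2 * (8 * X) + alpha ^+ 2 * (2 * sqnorm (b i)).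
  rewrite step_eq sqnormD sqnormZ dotvZr dotvDr -/X.
  have := sqnormD_le (a i) (b i); have := sqr_ge0 alpha; have := a_le i.
  set z := alpha ^+ 2 => ? z_ge0 ab_le.
  have : z * sqnorm (a i + b i) <= z * (8 * X + 2 * sqnorm (b i)).
    by apply: ler_wpM2l => //; lra.
  lra.
have sum_c : \sum_i c i = #|'I_N|%:R *: (A *m f).
  by rewrite card_ord A_d_mulmx scalerA mulfV ?scale1r // pnatr_eq0 -lt0n.
have sum_a : \sum_i dotv e (a i) = - (N%:R * dotv e (A *m e)).
  rewrite A_d_mulmx dotvZr mulrA mulfV ?mul1r ?pnatr_eq0 -?lt0n //.
  by rewrite dotv_sumr -sumrN; apply: eq_bigr => i _; rewrite dotvNr.
have sum_b : \sum_i dotv e (b i) = 0.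
  rewrite -dotv_sumr sumrB sum_c sumr_const -scaler_nat card_ord.
  by rewrite subrr -(scale0r (0 : 'cV[R]_d)) dotvZr mul0r.
have sum_bb : \sum_i sqnorm (b i) <= N%:R * (4 * F).
  apply: le_trans (sum_sqnorm_centered_le sum_c) _.
  rewrite -[N in N%:R]card_ord mulr_natl -sumr_const; apply: ler_sum => i _.
  rewrite sqnormZ; apply: le_trans (dotv_td_sqr_le _ _ f).
  by apply: ler_piMr; rewrite ?sqr_ge0.
have N_pos : (0 : R) < N%:R by rewrite ltr0n.
rewrite ler_pdivrMl //; apply: le_trans (ler_sum _ (fun i _ => term_le i)) _.
rewrite !big_split /= -!mulr_sumr sum_a sum_b sumr_const card_ord -mulr_natl.
have := A_quad e; rewrite -/X => quad_e.
have : alpha * (lam * X) <= alpha * dotv e (A *m e) by rewrite ler_wpM2l.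
have : alpha ^+ 2 * (\sum_i sqnorm (b i)) <= alpha ^+ 2 * (N%:R * (4 * F)).
  by rewrite ler_wpM2l ?sqr_ge0.
nra.
Qed.

Variable M : nat.

Definition inner_err (tt : 'cV[R]_d) (t : seq 'I_N) : R :=
  sqnorm (foldl (inner_step phi r gamma s alpha tt) tt t - thetas).

Definition inner_mean_err (tt : 'cV[R]_d) (k : nat) : R :=
  (N ^ k)%:R^-1 * \sum_(t : k.-tuple 'I_N) inner_err tt t.

Lemma inner_mean_err0 tt : inner_mean_err tt 0 = sqnorm (tt - thetas).
Proof. by rewrite /inner_mean_err sum_tuple0 expn0 invr1 mul1r. Qed.

Lemma inner_mean_errS tt k :
  inner_mean_err tt k.+1 <= (1 - 2 * alpha * lam + 8 * alpha ^+ 2) * inner_mean_err tt k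
                            + 8 * alpha ^+ 2 * sqnorm (tt - thetas).
Proof.
set kappa := _ - _ + _; set E := _ * sqnorm _.
have mean_step (t : seq 'I_N) :
    N%:R^-1 * \sum_i inner_err tt (rcons t i) <= kappa * inner_err tt t + E.
  by under eq_bigr do rewrite /inner_err foldl_rcons; exact: inner_step_mean_sqnorm_le.
have -> : inner_mean_err tt k.+1 = (N ^ k)%:R^-1 *
    \sum_(t : k.-tuple 'I_N) (N%:R^-1 * \sum_i inner_err tt (rcons t i)).
  by rewrite /inner_mean_err sum_tuple_rcons -mulr_sumr mulrA -invfM -natrM -expnSr.
apply: le_trans (ler_wpM2l _ (ler_sum _ (fun (t : k.-tuple 'I_N) _ => mean_step t))) _.
  by rewrite invr_ge0 ler0n.
have Nk_neq0 : (N ^ k)%:R != 0 :> R by rewrite pnatr_eq0 -lt0n expn_gt0 N_gt0.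
rewrite big_split /= sumr_const card_tuple card_ord -[E *+ _]mulr_natl mulrDr mulKf //.
by rewrite -mulr_sumr mulrCA.
Qed.

Lemma epoch_mean_sqnorm tt :
  #|Omega N M|%:R^-1 * \sum_(w : Omega N M) sqnorm (epoch phi r gamma s alpha tt w - thetas)
  = M%:R^-1 * \sum_(k < M) inner_mean_err tt k.
Proof.
have NM_neq0 : (N ^ M)%:R != 0 :> R by rewrite pnatr_eq0 -lt0n expn_gt0 N_gt0.
have sum_take (k : 'I_M) : \sum_(t : M.-tuple 'I_N) inner_err tt (take k t)
    = (N ^ M)%:R * inner_mean_err tt k.
  rewrite sum_tuple_take; last exact: ltnW.
  rewrite card_ord -[LHS]mulr_natl /inner_mean_err.
  have -> : (N ^ M = N ^ (M - k) * N ^ k)%N by rewrite -expnD subnK // ltnW.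
  by rewrite natrM -mulrA mulVKf // pnatr_eq0 -lt0n expn_gt0 N_gt0.
have -> : \sum_(w : Omega N M) sqnorm (epoch phi r gamma s alpha tt w - thetas) =
    \sum_(k < M) \sum_(t : M.-tuple 'I_N) inner_err tt (take k t).
  by rewrite [RHS]exchange_big [RHS]pair_big.
under eq_bigr do rewrite sum_take.
rewrite -mulr_sumr card_prod card_tuple !card_ord natrM invfM.
by rewrite [_^-1 * M%:R^-1]mulrC -mulrA mulKf.
Qed.

Lemma epoch_mean_sqnorm_le tt : (0 < M)%N ->
  M%:R * (2 * alpha * lam - 8 * alpha ^+ 2) *
    (#|Omega N M|%:R^-1 * \sum_(w : Omega N M) sqnorm (epoch phi r gamma s alpha tt w - thetas))
  <= (1 + 8 * alpha ^+ 2 * M%:R) * sqnorm (tt - thetas).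
Proof.
move=> M_gt0; rewrite epoch_mean_sqnorm.
set c := _ - _; set F := sqnorm _; set G := inner_mean_err tt.
have G_rec k : G k.+1 + c * G k <= G k + 8 * alpha ^+ 2 * F.
  by have := inner_mean_errS tt k; rewrite -/G -/F /c; lra.
have := sum_le_of_recurrence G_rec M; rewrite /G inner_mean_err0 -/F -/G.
have G_ge0 : 0 <= G M.
  by apply: mulr_ge0; [rewrite invr_ge0 ler0n | apply: sumr_ge0 => t _; exact: sqnorm_ge0].
have -> : M%:R * c * (M%:R^-1 * \sum_(k < M) G k) = c * \sum_(k < M) G k.
  by rewrite mulrAC mulVKf 1?mulrC // pnatr_eq0 -lt0n.
lra.
Qed.

Lemma Exp_iter0 f theta0 : Exp_iter phi r gamma s alpha M 0 f theta0 = f theta0.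
Proof.
rewrite /Exp_iter /run (sum_tuple0 (fun ws => f (foldl _ theta0 ws))).
by rewrite card_tuple invr1 mul1r.
Qed.

Lemma Exp_iterS m f theta0 :
  Exp_iter phi r gamma s alpha M m.+1 f theta0 = #|Omega N M|%:R^-1 *
    \sum_(w : Omega N M) Exp_iter phi r gamma s alpha M m f (epoch phi r gamma s alpha theta0 w).
Proof.
rewrite /Exp_iter /run (sum_tuple_cons _ (fun ws => f (foldl _ theta0 ws))).
by rewrite !card_tuple -mulr_sumr mulrA -invfM !natrX -exprS.
Qed.

Lemma Exp_iter_le_geometric f (rho : R) : 0 <= rho ->
  (forall theta, #|Omega N M|%:R^-1 *
     \sum_(w : Omega N M) f (epoch phi r gamma s alpha theta w) <= rho * f theta) ->
  forall m theta0, Exp_iter phi r gamma s alpha M m f theta0 <= rho ^+ m * f theta0.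
Proof.
move=> rho_ge0 epoch_le; elim=> [|m IHm] theta0.
  by rewrite Exp_iter0 expr0 mul1r.
rewrite Exp_iterS; apply: le_trans (ler_wpM2l _ (ler_sum _ (fun w _ => IHm _))) _.
  by rewrite invr_ge0 ler0n.
rewrite -mulr_sumr mulrCA exprSr -mulrA.
by apply: ler_wpM2l; [exact: exprn_ge0 | exact: epoch_le].
Qed.

End TD_SVRG.

Theorem proposition1 (R : realType) (S : finType) (d : nat)
  (phi : S -> 'cV[R]_d) (r : S -> S -> R) (gamma : R)
  (N : nat) (s : 'I_N.+1 -> S) (lamA : R) (M : nat) :
  0 <= gamma -> gamma < 1 ->
  (forall x : S, sqnorm (phi x) <= 1) ->
  (0 < N)%N ->
  A_d phi gamma s \in unitmx ->
  is_min_eigenvalue (sym_part (A_d phi gamma s)) lamA ->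
  0 < lamA ->
  M%:R = 32 / lamA ^+ 2 ->
  forall (m : nat) (theta0 : 'cV[R]_d),
    Exp_iter phi r gamma s (lamA / 32) M m
      (fun th => sqnorm (th - theta_star phi r gamma s)) theta0
    <= (5 / 7) ^+ m * sqnorm (theta0 - theta_star phi r gamma s).
Proof.
move=> gamma_ge0 gamma_lt1 phi_le1 N_gt0 A_unit A_eig lamA_gt0 M_def.
have A_quad x := sym_part_quad_form_ge x A_eig.
have alpha_ge0 : 0 <= lamA / 32 by rewrite divr_ge0 // ltW.
have M_gt0 : (0 < M)%N.
  by rewrite -(ltr0n R) M_def divr_gt0 // exprn_gt0.
apply: Exp_iter_le_geometric => [|theta]; first lra.
have := epoch_mean_sqnorm_le r A_unit gamma_ge0 gamma_lt1 phi_le1 N_gt0 alpha_ge0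
  A_quad theta M_gt0.
have lamA_neq0 : lamA != 0 by rewrite gt_eqF.
have -> : M%:R * (2 * (lamA / 32) * lamA - 8 * (lamA / 32) ^+ 2) = 7 / 4.
  by rewrite M_def; field.
have -> : 1 + 8 * (lamA / 32) ^+ 2 * M%:R = 5 / 4 by rewrite M_def; field.
have := sqnorm_ge0 (theta - theta_star phi r gamma s); lra.
Qed.
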